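(* Let $d\ge2$, $b:=2^d$, $N\in\mathbb{N}$, $L:=\min\{\ell\ge0:b^\ell\ge N\}$, and assume $L\ge3$. Let $0\le\ell\le L-3$ and $u\in\{0,\dots,b-1\}^\ell$, write $C_u=\prod_{j=1}^d[A_j,A_j+2^{-\ell})$, and let $R_u=\prod_{j=1}^d[a_j,b_j)$ be a half-open rectangle with $\lambda_d(R_u)=M(u)/N$ and \[ |a_j-A_j|\le S_\ell,\qquad |b_j-(A_j+2^{-\ell})|\le S_\ell\qquad(1\le j\le d). \] Then there exist half-open rectangles $\{R_{u\ast v}\}_{v=0}^{b-1}$ such that: (i) they partition $R_u$ up to Lebesgue-null sets; (ii) $\lambda_d(R_{u\ast v})=M(u\ast v)/N$ for every $v$; (iii) writing $C_{u\ast v}=\prod_{j=1}^d[A_{u\ast v,j},A_{u\ast v,j}+2^{-(\ell+1)})$ and $R_{u\ast v}=\prod_{j=1}^d[a_{u\ast v,j},b_{u\ast v,j})$, one has $|a_{u\ast v,j}-A_{u\ast v,j}|\le S_{\ell+1}$ and $|b_{u\ast v,j}-(A_{u\ast v,j}+2^{-(\ell+1)})|\le S_{\ell+1}$ for all $1\le j\le d$.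
   Context: $\lambda_d$ is Lebesgue measure. $u\ast v$ denotes the word $u$ followed by the digit $v$. For $0\le\ell\le L-3$: $\Delta_\ell:=\frac{2^{2d-3}}{N}2^{\ell(d-1)}$, $S_0:=0$, $S_{\ell+1}:=S_\ell+\Delta_\ell$. $M(w):=\#\{1\le n\le N:x_n\in C_w\}$, where: for $a\in\{0,\dots,b-1\}$, $a=\sum_{j=1}^d\varepsilon_j(a)2^{j-1}$ with $\varepsilon_j(a)\in\{0,1\}$; for $m\ge0$, $m=\sum_{k\ge0}a_k(m)b^k$ in base $b$; $x_n:=\bigl(\sum_{k\ge0}\varepsilon_1(a_k(n-1))2^{-(k+1)},\dots,\sum_{k\ge0}\varepsilon_d(a_k(n-1))2^{-(k+1)}\bigr)$; and for a word $w=(w_0,\dots,w_{\ell-1})$, $C_w:=\prod_{j=1}^d\bigl[\sum_{k=0}^{\ell-1}\varepsilon_j(w_k)2^{-(k+1)},\sum_{k=0}^{\ell-1}\varepsilon_j(w_k)2^{-(k+1)}+2^{-\ell}\bigr)$, with $C_\varnothing=[0,1)^d$. *)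

From HB Require Import structures.
From mathcomp Require Import all_boot all_order all_algebra.
From mathcomp Require Import all_classical all_reals.
Set Implicit Arguments. Unset Strict Implicit. Unset Printing Implicit Defensive.
Import Order.TTheory GRing.Theory Num.Theory.
Local Open Scope classical_set_scope.
Local Open Scope ring_scope.

Section Defs.
Variable R : realType.
Variable d : nat.

(* points of R^d are functions 'I_d -> R; coordinate j : 'I_d is the
   paper's coordinate j+1 *)

Definition box (a b : 'I_d -> R) : set ('I_d -> R) :=
  [set x | forall j, a j <= x j /\ x j < b j].

Definition vol (a b : 'I_d -> R) : R := \prod_(j < d) Num.max (b j - a j) 0.

Definition null (E : set ('I_d -> R)) : Prop :=
  forall e : R, 0 < e -> exists a b : nat -> 'I_d -> R,
    E `<=` \bigcup_(k in [set: nat]) box (a k) (b k) /\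
    forall n, \sum_(k < n) vol (a k) (b k) <= e.

(* eps_j(a): the j-th binary digit of a (paper's eps_{j+1}) *)
Definition eps (j : 'I_d) (a : nat) : nat := ((a %/ 2 ^ j) %% 2)%N.

Definition digit (k m : nat) : nat := ((m %/ (2 ^ d) ^ k) %% 2 ^ d)%N.

(* the point x_n (n >= 1).  The infinite series is truncated to k < n,
   which is exact since a_k(n-1) = 0 for k >= n (as n-1 < b^n). *)
Definition xpt (n : nat) : 'I_d -> R := fun j =>
  \sum_(k < n) (eps j (digit k n.-1))%:R * (2 ^- k.+1).

Definition corner (w : seq nat) : 'I_d -> R := fun j =>
  \sum_(k < size w) (eps j (nth 0%N w k))%:R * (2 ^- k.+1).

Definition cube (w : seq nat) : set ('I_d -> R) :=
  box (corner w) (fun j => corner w j + 2 ^- (size w)).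

Definition Mcount (N : nat) (w : seq nat) : nat :=
  #|[set n : 'I_N | `[< cube w (xpt n.+1) >] ]|.

Definition Delta (N l : nat) : R :=
  (2 ^+ (2 * d - 3)%N) / N%:R * 2 ^+ (l * (d - 1))%N.

Definition Ssum (N l : nat) : R := \sum_(i < l) Delta N i.

End Defs.

(* The point x_n lies in the cube C_w exactly when n - 1 = sum_k w_k b^k
   (mod b^|w|), i.e. the word w read with its first digit as the least
   significant one ([word_val]); so M(w) counts the n < N in one residue class.
   The child u*v is reached from u by fixing the d binary digits of v one at a
   time, and fixing digit j splits a residue class modulo P = b^l 2^j with K
   elements into two classes modulo 2P with ceil(K/2) and floor(K/2) elements.
   Cutting coordinate j of the current rectangle in that proportion produces
   rectangles that tile R_u and whose volumes telescope to M(u*v)/N.  Each cut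
   misses the dyadic midpoint by the error inherited from R_u plus at most
   2^-l (ceil(K/2)/K - 1/2) <= 2^-(l+1)/K.  Since b^(l+1) < N, every such K
   is positive and N < b^(l+1) K, which makes this extra error at most
   Delta_l. *)

From HB Require Import structures.
From mathcomp Require Import all_boot all_order all_algebra.
From mathcomp Require Import all_classical all_reals.
From mathcomp Require Import zify ring lra.
Import Order.TTheory GRing.Theory Num.Theory.
Local Open Scope classical_set_scope.
Local Open Scope nat_scope.

Lemma modnM_split m p q : 0 < p -> 0 < q ->
  m %% (p * q) = m %% p + p * (m %/ p %% q).
Proof.
move=> p_gt0 q_gt0.
have em : m = m %/ p %/ q * (p * q) + (m %% p + p * (m %/ p %% q)).
  rewrite {1}(divn_eq m p) {1}(divn_eq (m %/ p) q); lia.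
rewrite {1}em modnMDl modn_small //.
have := ltn_pmod m p_gt0; have := ltn_pmod (m %/ p) q_gt0; nia.
Qed.

Lemma uniq_divmod p r1 r2 y1 y2 : r1 < p -> r2 < p ->
  r1 + p * y1 = r2 + p * y2 -> r1 = r2 /\ y1 = y2.
Proof.
move=> lt_r1 lt_r2 e; have p_gt0 : 0 < p by apply: leq_ltn_trans lt_r1.
have em := f_equal (modn^~ p) e; have ed := f_equal (divn^~ p) e; move: em ed => /=.
rewrite !(addnC _ (p * _)) !(mulnC p) !modnMDl !divnMDl // !modn_small // !divn_small //.
by rewrite !addn0.
Qed.

Definition count_mod (q r N : nat) := count (fun m => m %% q == r) (iota 0 N).

Lemma card_ord_count N (p : pred nat) :
  #|[set n : 'I_N | p (val n)]%SET| = count p (iota 0 N).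
Proof. by rewrite cardsE cardE /enum_mem size_filter -enumT -val_enum_ord count_map. Qed.

Lemma count_modE q r N : r < q -> count_mod q r N = (N + q - 1 - r) %/ q.
Proof.
move=> lt_rq; have q_gt0 : 0 < q by apply: leq_ltn_trans lt_rq.
elim: N => [|N IH]; first by rewrite /count_mod divn_small //; lia.
rewrite /count_mod -addn1 iotaD count_cat /= addn0 -/(count_mod q r N) IH.
have -> : N + 1 + q - 1 - r = (N + q - 1 - r).+1 by lia.
rewrite divnS // addnC; congr (_ + _).
have ltNq := ltn_pmod N q_gt0.
have -> : (N + q - 1 - r).+1 = N %/ q * q + (N %% q + q - r).
  by have := divn_eq N q; lia.
rewrite dvdn_addr ?dvdn_mull // add0n; congr (nat_of_bool _); apply/idP/idP => [/eqP ->|/dvdnP [k ek]].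
  by rewrite addKn dvdnn.
have k1 : k = 1 by nia.
by rewrite k1 mul1n in ek; apply/eqP; lia.
Qed.

Lemma count_mod_double p r N : r < p ->
  count_mod (2 * p) r N = uphalf (count_mod p r N) /\
  count_mod (2 * p) (r + p) N = (count_mod p r N)./2.
Proof.
move=> lt_rp; have p_gt0 : 0 < p by apply: leq_ltn_trans lt_rp.
rewrite !count_modE ?(mulnC 2) ?divnMA -?divn2; try lia.
have -> : N + p * 2 - 1 - r = (N + p - 1 - r) + 1 * p by lia.
have -> : N + p * 2 - 1 - (r + p) = N + p - 1 - r by lia.
by rewrite divnDMl // uphalfE addn1 divn2.
Qed.

Lemma count_mod_lb q r N : r < q -> N < q * (count_mod q r N).+1.
Proof.
move=> lt_rq; have q_gt0 : 0 < q by apply: leq_ltn_trans lt_rq.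
rewrite count_modE // mulnC; apply: leq_trans (ltn_ceil _ q_gt0); lia.
Qed.

Definition word_val (B : nat) (w : seq nat) := \sum_(k < size w) nth 0 w k * B ^ k.

Lemma word_val_rcons B w x : word_val B (rcons w x) = word_val B w + x * B ^ size w.
Proof.
rewrite /word_val size_rcons big_ord_recr /= nth_rcons ltnn eqxx; congr (_ + _).
by apply: eq_bigr => k _; rewrite nth_rcons ltn_ord.
Qed.

Lemma word_val_lt B w : all (fun x => x < B) w -> word_val B w < B ^ size w.
Proof.
elim/last_ind: w => [|w x IH]; first by rewrite /word_val big_ord0 expn0.
rewrite all_rcons => /andP[lt_xB /IH lt_wB].
rewrite word_val_rcons size_rcons expnSr; nia.
Qed.

Lemma word_val_digits B w m : 0 < B -> all (fun x => x < B) w ->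
  (forall k, k < size w -> m %/ B ^ k %% B = nth 0 w k) <->
  m %% B ^ size w = word_val B w.
Proof.
move=> B_gt0; elim/last_ind: w => [|w x IH].
  by move=> _; rewrite /word_val big_ord0 expn0 modn1; split.
rewrite all_rcons => /andP[lt_xB all_w]; have {}IH := IH all_w.
rewrite size_rcons word_val_rcons expnSr modnM_split ?expn_gt0 ?B_gt0 //.
have lt_modB := ltn_pmod (m %/ B ^ size w) B_gt0.
split => [digits | ].
- have <- : m %% B ^ size w = word_val B w.
    by apply/IH => k lt_k; rewrite digits 1?nth_rcons ?lt_k //; lia.
  by rewrite digits // nth_rcons ltnn eqxx mulnC.
- rewrite (mulnC x) => /uniq_divmod [||e ex];
    rewrite ?word_val_lt ?ltn_pmod ?expn_gt0 ?B_gt0 //.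
  move=> k; rewrite ltnS leq_eqVlt nth_rcons => /predU1P[->|lt_k]; first by rewrite ltnn eqxx.
  by rewrite lt_k; apply: (proj2 IH e).
Qed.

Lemma eq_from_bits n x y : x < 2 ^ n -> y < 2 ^ n ->
  (forall j, j < n -> x %/ 2 ^ j %% 2 = y %/ 2 ^ j %% 2) -> x = y.
Proof.
move=> lt_x lt_y bits; set w := mkseq (fun j => y %/ 2 ^ j %% 2) n.
have all_w : all (fun b => b < 2) w by apply/allP => b /mapP[j _ ->]; rewrite ltn_pmod.
have digits z : (forall j, j < n -> z %/ 2 ^ j %% 2 = y %/ 2 ^ j %% 2) ->
    z %% 2 ^ n = word_val 2 w.
  by move=> zbits; rewrite -(size_mkseq (fun j => y %/ 2 ^ j %% 2) n);
    apply/word_val_digits => // j; rewrite size_mkseq => lt_j; rewrite nth_mkseq ?zbits.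
by rewrite -(modn_small lt_x) -(modn_small lt_y) (digits x bits) digits.
Qed.

Lemma modn_addn_pow v c {j k} : j <= k -> (v + 2 ^ k * c) %% 2 ^ j = v %% 2 ^ j.
Proof. by move=> le_jk; rewrite -(subnK le_jk) expnD mulnAC addnC modnMDl. Qed.

Lemma odd_div_pow v c k : v < 2 ^ k -> odd ((v + 2 ^ k * nat_of_bool c) %/ 2 ^ k) = c.
Proof. by move=> lt_v; rewrite addnC mulnC divnMDl ?expn_gt0 // divn_small // addn0 oddb. Qed.

Lemma modn_pow_succ v w j : v %% 2 ^ j.+1 = w %% 2 ^ j.+1 ->
  v %% 2 ^ j = w %% 2 ^ j /\ odd (v %/ 2 ^ j) = odd (w %/ 2 ^ j).
Proof.
move=> e; split.
  have dvd_pow : 2 ^ j %| 2 ^ j.+1 by rewrite dvdn_exp2l.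
  by rewrite -(modn_dvdm v dvd_pow) -(modn_dvdm w dvd_pow) e.
by move/(congr1 (fun m => odd (m %/ 2 ^ j))): e; rewrite /= expnS -!modn_divl !modn2 !oddb.
Qed.

Lemma first_diff_bit {n v w} : v < 2 ^ n -> w < 2 ^ n -> v != w ->
  exists2 j, j < n & v %% 2 ^ j = w %% 2 ^ j /\ odd (v %/ 2 ^ j) != odd (w %/ 2 ^ j).
Proof.
move=> lt_v lt_w; apply: contraNP => no_diff; apply/eqP.
rewrite -(modn_small lt_v) -(modn_small lt_w).
elim: n {lt_v lt_w} no_diff => [|k IH] no_diff; first by rewrite !modn1.
have e : v %% 2 ^ k = w %% 2 ^ k.
  by apply: IH => -[j lt_j diff]; apply: no_diff; exists j => //; apply: ltnW.
rewrite expnSr !modnM_split ?expn_gt0 // !modn2 e.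
case: (boolP (odd (v %/ 2 ^ k) == odd (w %/ 2 ^ k))) => [/eqP -> //|diff].
by case: no_diff; exists k.
Qed.

Section Refinement.
Variables (p r N : nat).
Hypothesis lt_rp : r < p.

(* For p = b^|u| and r = word_val b u, [refine_cnt v 0] is M(u) and, for v < b,
   [refine_cnt v d] is M(u*v). *)
Definition refine_cnt v j := count_mod (p * 2 ^ j) (r + p * (v %% 2 ^ j)) N.

Lemma refine_class_lt v j : r + p * (v %% 2 ^ j) < p * 2 ^ j.
Proof. by have := ltn_pmod v (expn_gt0 2 j); nia. Qed.

Lemma refine_cnt0 v : refine_cnt v 0 = count_mod p r N.
Proof. by rewrite /refine_cnt expn0 muln1 modn1 muln0 addn0. Qed.

Lemma refine_cntS v j : refine_cnt v j.+1 =
  if odd (v %/ 2 ^ j) then (refine_cnt v j)./2 else uphalf (refine_cnt v j).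
Proof.
have [lo hi] := count_mod_double _ _ N (refine_class_lt v j).
rewrite /refine_cnt expnSr modnM_split ?expn_gt0 // modn2 mulnA (mulnC _ 2).
by case: odd => /=; rewrite ?muln0 ?addn0 ?muln1 ?mulnDr ?addnA.
Qed.

Lemma refine_cnt_lb v j : N < p * 2 ^ j * (refine_cnt v j).+1.
Proof. exact: count_mod_lb (refine_class_lt v j). Qed.

Lemma refine_cnt_gt0 v j : p * 2 ^ j < N -> 0 < refine_cnt v j.
Proof.
move=> lt_N; rewrite lt0n; apply: contraTneq (refine_cnt_lb v j) => ->.
by rewrite muln1 -leqNgt ltnW.
Qed.

Lemma refine_cnt_big n v j : j < n -> 0 < refine_cnt v j -> N < p * 2 ^ n * refine_cnt v j.
Proof.
move=> lt_jn K_gt0; apply: leq_trans (refine_cnt_lb v j) _.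
rewrite -!mulnA leq_mul2l; apply/orP; right.
have : 2 * 2 ^ j <= 2 ^ n by rewrite -expnS leq_exp2l.
move: K_gt0; move: (refine_cnt v j) (2 ^ j) (2 ^ n) => K X Y; nia.
Qed.

Lemma refine_cnt_full n v : v < 2 ^ n ->
  refine_cnt v n = count_mod (p * 2 ^ n) (r + p * v) N.
Proof. by move=> lt_v; rewrite /refine_cnt modn_small. Qed.

End Refinement.

Local Open Scope ring_scope.

Section BinaryFractions.
Variable R : realType.
Implicit Types (bit al be : nat -> nat).

Definition bin_frac bit n : R := \sum_(k < n) (bit k)%:R * 2 ^- k.+1.

Fixpoint bin_int bit n : nat := if n is n.+1 then (2 * bin_int bit n + bit n)%N else 0%N.

Lemma bin_fracS bit n : bin_frac bit n.+1 = bin_frac bit n + (bit n)%:R * 2 ^- n.+1.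
Proof. by rewrite /bin_frac big_ord_recr. Qed.

Lemma bin_fracE bit n : bin_frac bit n * 2 ^+ n = (bin_int bit n)%:R.
Proof.
elim: n => [|n IH]; first by rewrite /bin_frac big_ord0 mul0r.
rewrite bin_fracS exprSr mulrDl mulrA IH -(exprSr 2 n) -mulrA.
by rewrite mulVf ?expf_neq0 ?pnatr_eq0 // mulr1 natrD natrM mulrC.
Qed.

Lemma bin_int_inj {al be n} : (forall k, al k <= 1)%N -> (forall k, be k <= 1)%N ->
  bin_int al n = bin_int be n -> forall k, (k < n)%N -> al k = be k.
Proof.
move=> al_bit be_bit; elim: n => [|n IH] //= e k lt_kn.
have := al_bit n; have := be_bit n => be1 al1.
have [e1 e2] : bin_int al n = bin_int be n /\ al n = be n by lia.
by case: (ltngtP k n) => [lt_k|lt_nk|->] //; [apply: IH | lia].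
Qed.

Lemma bin_int_window al be l (x : R) :
  bin_frac al l <= x < bin_frac al l + 2 ^- l ->
  bin_frac be l <= x < bin_frac be l + 2 ^- l -> bin_int al l = bin_int be l.
Proof.
have pow_gt0 : 0 < (2 : R) ^+ l by rewrite exprn_gt0.
have scale bit : (bin_frac bit l <= x < bin_frac bit l + 2 ^- l) =
    ((bin_int bit l)%:R <= x * 2 ^+ l < (bin_int bit l)%:R + 1).
  by rewrite -(ler_pM2r pow_gt0) -(ltr_pM2r pow_gt0) mulrDl mulVf ?gt_eqF ?bin_fracE.
rewrite !scale => /andP[al_le al_gt] /andP[be_le be_gt].
have lt_al_be : (bin_int al l < (bin_int be l).+1)%N by rewrite -(ltr_nat R) -addn1 natrD; lra.
have lt_be_al : (bin_int be l < (bin_int al l).+1)%N by rewrite -(ltr_nat R) -addn1 natrD; lra.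
lia.
Qed.

Lemma bin_frac_tail {bit} l n : (forall k, bit k <= 1)%N ->
  bin_frac bit l <= bin_frac bit (l + n) <= bin_frac bit l + 2 ^- l - 2 ^- (l + n).
Proof.
move=> bit1; elim: n => [|n IH]; first by rewrite addn0 addrK lexx.
rewrite addnS bin_fracS; set e : R := 2 ^- (l + n).+1.
have e2 : 2 ^- (l + n) = 2 * e by rewrite /e exprS invfM mulrA divff ?mul1r ?pnatr_eq0.
have e_gt0 : 0 < e by rewrite /e invr_gt0 exprn_gt0.
have digit_e : 0 <= (bit (l + n))%:R * e <= e.
  by rewrite mulr_ge0 ?ler0n ?(ltW e_gt0) //= ler_piMl ?(ltW e_gt0) ?lern1.
move: IH digit_e; rewrite e2; lra.
Qed.

Lemma bin_frac_stable {bit n} p : (forall k, (n <= k)%N -> bit k = 0%N) ->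
  bin_frac bit (n + p) = bin_frac bit n.
Proof.
move=> bit0; elim: p => [|p IH]; first by rewrite addn0.
by rewrite addnS bin_fracS IH bit0 ?leq_addr // mul0r addr0.
Qed.

Lemma bin_frac_window bit n l : (forall k, bit k <= 1)%N ->
  (forall k, (n <= k)%N -> bit k = 0%N) ->
  bin_frac bit l <= bin_frac bit n < bin_frac bit l + 2 ^- l.
Proof.
move=> bit1 bit0; have pow_gt0 m : 0 < (2 : R) ^- m by rewrite invr_gt0 exprn_gt0.
case: (leqP l n) => [le_ln|lt_nl].
- have := bin_frac_tail l (n - l) bit1; rewrite subnKC // => /andP[-> le_tail].
  by apply: le_lt_trans le_tail _; rewrite ltrBlDr ltrDl pow_gt0.
- have := bin_frac_stable (l - n) bit0; rewrite subnKC => [->|]; last exact: ltnW.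
  by rewrite lexx ltrDl pow_gt0.
Qed.

End BinaryFractions.

Section Cubes.
Variables (R : realType) (d : nat).
Hypothesis d_gt0 : (0 < d)%N.

Lemma eps_le1 (j : 'I_d) a : (eps j a <= 1)%N.
Proof. by rewrite /eps -ltnS ltn_pmod. Qed.

Lemma corner_rcons w x (j : 'I_d) :
  corner R (rcons w x) j = corner R w j + (eps j x)%:R * 2 ^- (size w).+1.
Proof.
rewrite /corner size_rcons big_ord_recr /= nth_rcons ltnn eqxx; congr (_ + _).
by apply: eq_bigr => k _; rewrite nth_rcons ltn_ord.
Qed.

Lemma xpt_window m l (j : 'I_d) :
  bin_frac R (fun k => eps j (digit d k m)) l <= xpt R m.+1 j <
  bin_frac R (fun k => eps j (digit d k m)) l + 2 ^- l.
Proof.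
apply: bin_frac_window => [k|k le_mk]; first exact: eps_le1.
have B_gt1 : (1 < 2 ^ d)%N by rewrite -{1}(expn0 2) ltn_exp2l.
have lt_mB : (m < (2 ^ d) ^ k)%N := ltn_trans le_mk (ltn_expl k B_gt1).
by rewrite /digit /eps (divn_small lt_mB) mod0n div0n mod0n.
Qed.

Lemma xpt_in_cube w m : all (fun x => x < 2 ^ d)%N w ->
  cube w (xpt R (d:=d) m.+1) <-> (m %% (2 ^ d) ^ size w = word_val (2 ^ d) w)%N.
Proof.
move=> w_digits; rewrite -word_val_digits ?expn_gt0 //.
have cornerE j : corner R w j = bin_frac R (fun k => eps j (nth 0%N w k)) (size w) by [].
split=> [in_cube k lt_k | digits j].
- have lt_wk : (nth 0%N w k < 2 ^ d)%N by apply: (allP w_digits); rewrite mem_nth.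
  apply: eq_from_bits lt_wk _ => [|i lt_i]; first by rewrite ltn_pmod ?expn_gt0.
  pose j : 'I_d := Ordinal lt_i.
  have [lo hi] := in_cube j; rewrite cornerE in lo hi.
  have := @bin_int_window R _ _ _ _ (xpt_window m (size w) j) (introT andP (conj lo hi)).
  by move/(bin_int_inj (fun=> eps_le1 j _) (fun=> eps_le1 j _))/(_ k lt_k).
- have -> : corner R w j = bin_frac R (fun k => eps j (digit d k m)) (size w).
    by apply: eq_bigr => k _; rewrite /digit digits.
  by apply/andP; apply: xpt_window.
Qed.

Lemma McountE N w : all (fun x => x < 2 ^ d)%N w ->
  Mcount R d N w = count_mod ((2 ^ d) ^ size w) (word_val (2 ^ d) w) N.
Proof.
move=> w_digits; rewrite /Mcount /count_mod -card_ord_count.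
apply: eq_card => n; rewrite inE; apply/idP/eqP => [/asboolP/asboolP|].
  exact: (xpt_in_cube w n w_digits).1.
by move=> /(xpt_in_cube w n w_digits) in_cube; apply/asboolP/asboolP.
Qed.

End Cubes.

Section UphalfRatio.
Context {R : realFieldType}.

Lemma uphalf_ratio_ge0 n : 0 <= (uphalf n)%:R / n%:R :> R.
Proof. by rewrite divr_ge0 ?ler0n. Qed.

Lemma uphalf_ratio_le1 n : (uphalf n)%:R / n%:R <= 1 :> R.
Proof.
case: n => [|n]; first by rewrite mul0r ler01.
by rewrite ler_pdivrMr ?ltr0n // mul1r ler_nat; lia.
Qed.

Lemma uphalf_ratio_dev n : (0 < n)%N ->
  `|(uphalf n)%:R / n%:R - 2^-1| <= (2 * n%:R)^-1 :> R.
Proof.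
move=> n_gt0; have n_neq0 : n%:R != 0 :> R by rewrite pnatr_eq0 -lt0n.
have -> : (uphalf n)%:R / n%:R - 2^-1 = (odd n)%:R / (2 * n%:R) :> R.
  have -> : (odd n)%:R = 2 * (uphalf n)%:R - n%:R :> R.
    by rewrite -natrM -natrB ?mul2n ?uphalfK ?addnK //; lia.
  by field; rewrite n_neq0.
rewrite ger0_norm ?divr_ge0 ?mulr_ge0 ?ler0n //.
by apply: ler_piMl; rewrite ?invr_ge0 ?mulr_ge0 ?ler0n ?lern1 ?leq_b1.
Qed.

Lemma lerp_dev {x y c h rho S : R} : 0 <= h -> 0 <= rho <= 1 ->
  `|x - c| <= S -> `|y - (c + 2 * h)| <= S ->
  `|x + (y - x) * rho - (c + h)| <= S + 2 * h * `|rho - 2^-1|.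
Proof.
move=> h_ge0 /andP[rho_ge0 rho_le1] dev_x dev_y.
have -> : x + (y - x) * rho - (c + h) =
    (1 - rho) * (x - c) + rho * (y - (c + 2 * h)) + 2 * h * (rho - 2^-1) by field.
have rho'_ge0 : 0 <= 1 - rho by rewrite subr_ge0.
have nx : `|(1 - rho) * (x - c)| <= (1 - rho) * S by rewrite normrM ger0_norm // ler_wpM2l.
have ny : `|rho * (y - (c + 2 * h))| <= rho * S by rewrite normrM ger0_norm // ler_wpM2l.
have nh : `|2 * h * (rho - 2^-1)| = 2 * h * `|rho - 2^-1|.
  by rewrite normrM ger0_norm // mulr_ge0.
apply: le_trans (ler_normD _ _) _; rewrite nh lerD2r.
by apply: le_trans (ler_normD _ _) _; apply: le_trans (lerD nx ny) _; lra.
Qed.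

End UphalfRatio.

Section Boxes.
Context {R : realType} {d : nat}.

Lemma subset0_null {E : set ('I_d -> R)} : (0 < d)%N -> E `<=` set0 -> null E.
Proof.
move=> d_gt0 E0 e e_gt0; exists (fun _ _ => 0), (fun _ _ => 0); split=> [x /E0 //|n].
rewrite big1 ?ltW // => k _.
by rewrite /vol (bigD1 (Ordinal d_gt0)) //= subrr maxxx mul0r.
Qed.

Lemma vol_gt0_lt (a b : 'I_d -> R) : 0 < vol a b -> forall j, a j < b j.
Proof.
move=> vol_gt0 j; rewrite ltNge; apply: contraTN vol_gt0 => le_ba.
by rewrite /vol (bigD1 j) //= max_r ?subr_le0 // mul0r ltxx.
Qed.

Lemma SsumS N l : Ssum R d N l.+1 = Ssum R d N l + Delta R d N l.
Proof. by rewrite /Ssum big_ord_recr. Qed.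

Lemma Delta_lb N l K : (2 <= d)%N -> (0 < N)%N -> (0 < K)%N ->
  (N <= (2 ^ d) ^ l * 2 ^ d * K)%N -> 2 ^- l.+1 / K%:R <= Delta R d N l.
Proof.
move=> d_ge2 N_gt0 K_gt0 le_N.
have le_pow : ((2 ^ d) ^ l * 2 ^ d <= 2 ^ l.+1 * (2 ^ (2 * d - 3) * 2 ^ (l * (d - 1))))%N.
  by rewrite -expnM -!expnD leq_exp2l //; nia.
rewrite /Delta mulrAC ler_pdivlMr ?ltr0n // -mulrA ler_pdivrMl ?exprn_gt0 //.
rewrite mulrC ler_pdivrMr ?ltr0n // -!natrX -!natrM ler_nat.
by apply: leq_trans le_N _; rewrite leq_mul2r le_pow orbT.
Qed.

End Boxes.

Section Children.
Context {R : realType} {d : nat} {a b : 'I_d -> R} {p r N : nat}.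
Hypotheses (d_gt0 : (0 < d)%N) (lt_rp : (r < p)%N).
Hypothesis cnt_gt0 : forall v j, (j <= d)%N -> (0 < refine_cnt p r N v j)%N.
Hypothesis lt_ab : forall j, a j < b j.

Local Notation K := (refine_cnt p r N).

(* Coordinate j is cut in the proportion uphalf K : K./2 of the two classes that
   bit j of v chooses between (see [refine_cntS]). *)
Definition cut v (j : 'I_d) : R :=
  a j + (b j - a j) * ((uphalf (K v j))%:R / (K v j)%:R).
Definition child_lo v (j : 'I_d) : R := if odd (v %/ 2 ^ j) then cut v j else a j.
Definition child_hi v (j : 'I_d) : R := if odd (v %/ 2 ^ j) then b j else cut v j.

Lemma cut_between v j : a j <= cut v j <= b j.
Proof.
have len_ge0 : 0 <= b j - a j by rewrite subr_ge0 ltW.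
rewrite /cut lerDl mulr_ge0 ?uphalf_ratio_ge0 //= -lerBrDl.
by apply: ler_piMr; rewrite ?uphalf_ratio_le1.
Qed.

Lemma cut_eq {v w} (j : 'I_d) : (v %% 2 ^ j = w %% 2 ^ j)%N -> cut v j = cut w j.
Proof. by move=> e; rewrite /cut /refine_cnt e. Qed.

Lemma child_eq {v w} (j : 'I_d) : (v %% 2 ^ j.+1 = w %% 2 ^ j.+1)%N ->
  child_lo v j = child_lo w j /\ child_hi v j = child_hi w j.
Proof. by case/modn_pow_succ => e o; rewrite /child_lo /child_hi o (cut_eq j e). Qed.

Lemma child_len v (j : 'I_d) :
  child_hi v j - child_lo v j = (b j - a j) * ((K v j.+1)%:R / (K v j)%:R).
Proof.
have K_neq0 : (K v j)%:R != 0 :> R by rewrite pnatr_eq0 -lt0n cnt_gt0 // ltnW.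
rewrite /child_hi /child_lo /cut refine_cntS //; case: odd; last by rewrite addrAC subrr add0r.
have -> : ((K v j)./2)%:R = (K v j)%:R - (uphalf (K v j))%:R :> R.
  by rewrite -natrB; [congr _%:R|]; lia.
by field.
Qed.

Lemma child_vol v : vol (child_lo v) (child_hi v) = vol a b * ((K v d)%:R / (K v 0)%:R).
Proof.
have len_ge0 j : 0 <= b j - a j by rewrite subr_ge0 ltW.
rewrite -(telescope_prodf (f := fun j => (K v j)%:R)) // => [|k /andP[_ lt_kd]]; last first.
  by rewrite pnatr_eq0 -lt0n cnt_gt0 // ltnW.
rewrite /vol big_mkord -big_split /=; apply: eq_bigr => j _.
by rewrite [in RHS]max_l // child_len max_l // mulr_ge0 ?divr_ge0 ?ler0n.
Qed.

Lemma child_sub v : box (child_lo v) (child_hi v) `<=` box a b.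
Proof.
move=> x in_child j; have [lo hi] := in_child j; have /andP[a_cut cut_b] := cut_between v j.
move: lo hi; rewrite /child_lo /child_hi; case: odd => lo hi; split=> //.
- exact: le_trans a_cut lo.
- exact: lt_le_trans hi cut_b.
Qed.

Lemma child_disj {v w : 'I_(2 ^ d)} : v != w ->
  box (child_lo v) (child_hi v) `&` box (child_lo w) (child_hi w) `<=` set0.
Proof.
move=> neq_vw x [in_v in_w].
have [j lt_jd [e odd_neq]] := first_diff_bit (ltn_ord v) (ltn_ord w) neq_vw.
have [[lo_v hi_v] [lo_w hi_w]] := (in_v (Ordinal lt_jd), in_w (Ordinal lt_jd)).
move: lo_v hi_v lo_w hi_w odd_neq; rewrite /child_lo /child_hi /= (cut_eq (Ordinal lt_jd) e).
case: odd; case: odd => // lo_v hi_v lo_w hi_w _.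
- by have := lt_le_trans hi_w lo_v; rewrite ltxx.
- by have := lt_le_trans hi_v lo_w; rewrite ltxx.
Qed.

Lemma child_cover :
  box a b `<=` \bigcup_(v in [set: 'I_(2 ^ d)]) box (child_lo v) (child_hi v).
Proof.
move=> x x_ab.
suff /(_ d (leqnn d)) [v lt_v in_v] : forall k, (k <= d)%N -> exists2 v, (v < 2 ^ k)%N &
    forall j : 'I_d, (j < k)%N -> child_lo v j <= x j /\ x j < child_hi v j.
  by exists (Ordinal lt_v) => // j; apply: in_v.
elim=> [|k IH] le_kd; first by exists 0%N => // -[].
have [v lt_v in_v] := IH (ltnW le_kd).
pose jk : 'I_d := Ordinal le_kd; pose c := cut v jk <= x jk.
exists (v + 2 ^ k * c)%N => [|j]; first by rewrite expnS; case: c; lia.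
rewrite ltnS leq_eqVlt => /predU1P[ejk|lt_jk].
- have -> : j = jk by apply: val_inj.
  have [lo hi] := x_ab jk.
  rewrite /child_lo /child_hi odd_div_pow // (cut_eq jk (modn_addn_pow v c (leqnn k))) /c.
  by case: (leP (cut v jk) (x jk)).
- by have [-> ->] := child_eq j (modn_addn_pow v c lt_jk); apply: in_v.
Qed.

Lemma child_dev v (j : 'I_d) {c S h : R} : 0 <= h ->
  `|a j - c| <= S -> `|b j - (c + 2 * h)| <= S ->
  `|child_lo v j - (c + (odd (v %/ 2 ^ j))%:R * h)| <= S + h / (K v j)%:R /\
  `|child_hi v j - (c + (odd (v %/ 2 ^ j))%:R * h + h)| <= S + h / (K v j)%:R.
Proof.
move=> h_ge0 dev_a dev_b; have K_gt0 := cnt_gt0 v j (ltnW (ltn_ord j)).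
have S_le : S <= S + h / (K v j)%:R by rewrite lerDl divr_ge0 ?ler0n.
have dev_cut : `|cut v j - (c + h)| <= S + h / (K v j)%:R.
  apply: le_trans (lerp_dev h_ge0 _ dev_a dev_b) _.
    by rewrite uphalf_ratio_ge0 uphalf_ratio_le1.
  rewrite lerD2l (@le_trans _ _ (2 * h * (2 * (K v j)%:R)^-1)) //.
    by rewrite ler_wpM2l ?mulr_ge0 ?uphalf_ratio_dev.
  by rewrite invfM mulrACA mulfV ?pnatr_eq0 // mul1r.
rewrite /child_lo /child_hi; case: odd => /=; rewrite ?mul1r ?mul0r ?addr0.
- have -> : c + h + h = c + 2 * h by rewrite mulr_natl mulr2n addrA.
  by split=> //; apply: le_trans dev_b S_le.
- by split=> //; apply: le_trans dev_a S_le.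
Qed.

End Children.

Arguments child_lo {R d} a b p r N v j.
Arguments child_hi {R d} a b p r N v j.
Section Subdivision.
Context {R : realType} {d N l : nat} {u : seq nat} {a b : 'I_d -> R}.
Hypotheses (d_ge2 : (2 <= d)%N) (lt_N : ((2 ^ d) ^ l.+1 < N)%N).
Hypotheses (size_u : size u = l) (u_digits : all (fun x => x < 2 ^ d)%N u).
Hypothesis vol_ab : vol a b = (Mcount R d N u)%:R / N%:R.

Local Notation p := ((2 ^ d) ^ l)%N.
Local Notation r := (word_val (2 ^ d) u).
Local Notation K := (refine_cnt p r N).
Local Notation lo := (child_lo a b p r N).
Local Notation hi := (child_hi a b p r N).

Let d_gt0 : (0 < d)%N. Proof. exact: leq_trans d_ge2. Qed.

Let lt_rp : (r < p)%N. Proof. by rewrite -size_u word_val_lt. Qed.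

Let cnt_gt0 v j : (j <= d)%N -> (0 < K v j)%N.
Proof.
move=> le_jd; apply: refine_cnt_gt0 => //; apply: leq_ltn_trans lt_N.
by rewrite expnSr leq_mul2l leq_exp2l ?le_jd ?orbT.
Qed.

Let Mcount_u v : Mcount R d N u = K v 0.
Proof. by rewrite refine_cnt0 McountE // size_u. Qed.

Let lt_ab j : a j < b j.
Proof.
by apply: vol_gt0_lt; rewrite vol_ab (Mcount_u 0%N) divr_gt0 ?ltr0n ?cnt_gt0 //; lia.
Qed.

Lemma subdiv_cover : null (box a b `\` \bigcup_(v in [set: 'I_(2 ^ d)]) box (lo v) (hi v)).
Proof. by apply: subset0_null => // x [/(child_cover d_gt0 lt_rp) ab_x []]. Qed.

Lemma subdiv_sub : null ((\bigcup_(v in [set: 'I_(2 ^ d)]) box (lo v) (hi v)) `\` box a b).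
Proof. by apply: subset0_null => // x [[v _ /(child_sub lt_ab)]]. Qed.

Lemma subdiv_disj (v w : 'I_(2 ^ d)) :
  v != w -> null (box (lo v) (hi v) `&` box (lo w) (hi w)).
Proof. by move=> neq_vw; apply: subset0_null d_gt0 (child_disj neq_vw). Qed.

Lemma subdiv_vol (v : 'I_(2 ^ d)) : vol (lo v) (hi v) = (Mcount R d N (rcons u v))%:R / N%:R.
Proof.
rewrite child_vol // vol_ab (Mcount_u v) McountE ?all_rcons ?ltn_ord //.
rewrite size_rcons word_val_rcons size_u expnSr (mulnC v) -refine_cnt_full //.
by field; rewrite !pnatr_eq0 -!lt0n cnt_gt0 //; lia.
Qed.

Lemma subdiv_dev (v : 'I_(2 ^ d)) (j : 'I_d) :
  `|a j - corner R u j| <= Ssum R d N l ->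
  `|b j - (corner R u j + 2 ^- l)| <= Ssum R d N l ->
  `|lo v j - corner R (rcons u v) j| <= Ssum R d N l.+1 /\
  `|hi v j - (corner R (rcons u v) j + 2 ^- l.+1)| <= Ssum R d N l.+1.
Proof.
have halve : 2 ^- l = 2 * 2 ^- l.+1 :> R by rewrite exprS invfM mulrA divff ?mul1r ?pnatr_eq0.
have h_ge0 : 0 <= 2 ^- l.+1 :> R by rewrite invr_ge0 exprn_ge0.
rewrite halve corner_rcons // size_u SsumS /eps modn2 => dev_a dev_b.
have K_gt0 := cnt_gt0 v j (ltnW (ltn_ord j)).
have le_Delta : 2 ^- l.+1 / (K v j)%:R <= Delta R d N l.
  by apply: Delta_lb => //; [lia | apply/ltnW/refine_cnt_big].
have [dev_lo dev_hi] := child_dev cnt_gt0 v j h_ge0 dev_a dev_b.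
by split; [apply: le_trans dev_lo _ | apply: le_trans dev_hi _]; rewrite lerD2l.
Qed.

End Subdivision.

Theorem lemma2p8 (R : realType) (d N L l : nat) (u : seq nat)
  (a b : 'I_d -> R) :
  (2 <= d)%N ->
  (* L = min { l >= 0 : b^l >= N } with b = 2^d *)
  (N <= (2 ^ d) ^ L)%N ->
  (forall m, (N <= (2 ^ d) ^ m)%N -> (L <= m)%N) ->
  (3 <= L)%N ->
  (l <= L - 3)%N ->
  size u = l ->
  all (fun x => x < 2 ^ d)%N u ->
  vol a b = (Mcount R d N u)%:R / N%:R ->
  (forall j, `|a j - corner R u j| <= Ssum R d N l /\
             `|b j - (corner R u j + 2 ^- l)| <= Ssum R d N l) ->
  exists av bv : 'I_(2 ^ d) -> 'I_d -> R,
    [/\ null (box a b `\` \bigcup_(v in [set: 'I_(2 ^ d)]) box (av v) (bv v)),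
        null ((\bigcup_(v in [set: 'I_(2 ^ d)]) box (av v) (bv v)) `\` box a b),
        (forall v w : 'I_(2 ^ d), v != w ->
           null (box (av v) (bv v) `&` box (av w) (bv w))),
        (forall v : 'I_(2 ^ d),
           vol (av v) (bv v) = (Mcount R d N (rcons u v))%:R / N%:R) &
        (forall (v : 'I_(2 ^ d)) (j : 'I_d),
           `|av v j - corner R (rcons u v) j| <= Ssum R d N l.+1 /\
           `|bv v j - (corner R (rcons u v) j + 2 ^- l.+1)| <= Ssum R d N l.+1)].
Proof.
move=> d_ge2 _ L_min L_ge3 l_le size_u u_digits vol_ab dev_ab.
have lt_N : ((2 ^ d) ^ l.+1 < N)%N by rewrite ltnNge; apply/negP => /L_min; lia.
exists (child_lo a b ((2 ^ d) ^ l) (word_val (2 ^ d) u) N).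
exists (child_hi a b ((2 ^ d) ^ l) (word_val (2 ^ d) u) N).
split=> [||v w|v|v j].
- by apply: subdiv_cover.
- by apply: subdiv_sub.
- by apply: subdiv_disj.
- by apply: subdiv_vol.
- by have [] := dev_ab j; apply: subdiv_dev.
Qed.
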